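(* Let $X_1,X_2,Y_1,Y_2$ be totally ordered alphabets. For every $M\in\mathrm{Pack}$, \[\iota_{(X_1,X_2),(Y_1,Y_2)}\big(\Phi_M(X_1X_2,Y_1Y_2)\big)=\sum_{\substack{(\sigma',\sigma'')\in \mathrm{Adm}(\mathrm{row}(M))\\ (\tau',\tau'')\in \mathrm{Adm}(\mathrm{col}(M))}} \Phi_{\mu(\sigma')M\mu(\tau')^\top}(X_1,Y_1)\otimes \Phi_{\mu(\sigma'')M\mu(\tau'')^\top}(X_2,Y_2).\]
   Context: A totally ordered alphabet is a finite or countable set with a total order. $\mathbf{A}_{X,Y}=\mathbb{Q}[[t_{i,j}\mid i\in X,\ j\in Y]]$. A packed matrix is a matrix with entries in $\mathbb{N}$ with no zero row and no zero column (the empty matrix $1$ is packed); $\mathrm{Pack}$ is their set; $\mathrm{row}(M),\mathrm{col}(M)$ are the numbers of rows and columns. For $M=(m_{r,s})\in\mathrm{Pack}$ with $k$ rows and $l$ columns, $\Phi_M(X,Y)=\sum_{i_1<\dots<i_k\in X,\ j_1<\dots<j_l\in Y}\prod_{r,s} t_{i_r,j_s}^{m_{r,s}}$, extended linearly. For $\alpha:[k]\to[n]$, $\mu(\alpha)$ is the $n\times k$ matrix with $\mu(\alpha)_{i,j}=\delta_{i,\alpha(j)}$. $XY$ denotes $X\times Y$ with the lexicographic order ($(x,y)\leq(x',y')$ iff $x<x'$, or $x=x'$ and $y\leq y'$). $\iota_{(X_1,X_2),(Y_1,Y_2)}:\mathbf{A}_{X_1X_2,Y_1Y_2}\to\mathbf{A}_{X_1,Y_1}\hat\otimes\mathbf{A}_{X_2,Y_2}$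 is the continuous algebra map $t_{(x_1,x_2),(y_1,y_2)}\mapsto t_{x_1,y_1}\otimes t_{x_2,y_2}$. For $k\in\mathbb{N}$, $\mathrm{Adm}(k)$ is the set of pairs $(\sigma',\sigma'')$ of surjective maps $\sigma':[k]\twoheadrightarrow[k']$, $\sigma'':[k]\twoheadrightarrow[k'']$ (some $k',k''$) such that $\sigma'(1)\leq\dots\leq\sigma'(k)$ and, for all $i<j$ in $[k]$ with $\sigma'(i)=\sigma'(j)$, one has $\sigma''(i)<\sigma''(j)$. *)

From HB Require Import structures.
From mathcomp Require Import all_boot all_order all_algebra.
From mathcomp Require Import finmap multiset.

Set Implicit Arguments.
Unset Strict Implicit.
Unset Printing Implicit Defensive.

Import Order.TTheory GRing.Theory.

Local Open Scope ring_scope.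

(* A monomial in commuting variables indexed by V is a finite multiset of
   variables; a formal power series over Q in these variables is given by its
   coefficient function.  [series V] models Q[[t_v | v in V]]. *)
Definition series (V : choiceType) := {mset V}%mset -> rat.

(* Completed tensor product Q[[t_v | v in V1]] ^⊗ Q[[t_w | w in V2]]
   = Q[[t_v ⊗ 1, 1 ⊗ t_w]] : coefficients indexed by pairs of monomials. *)
Definition series2 (V1 V2 : choiceType) := {mset V1}%mset -> {mset V2}%mset -> rat.

Definition tensor (V1 V2 : choiceType) (f : series V1) (g : series V2)
  : series2 V1 V2 := fun n1 n2 => f n1 * g n2.

Fixpoint all_tuples (T : Type) (s : seq T) (k : nat) : seq (seq T) :=
  if k is k'.+1 then [seq x :: t | x <- s, t <- all_tuples s k'] else [:: [::]].

Definition packed (k l : nat) (M : 'M[nat]_(k, l)) : bool :=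
  [forall i, exists j, M i j != 0%N] && [forall j, exists i, M i j != 0%N].

(* the list of variables (with multiplicity) of the monomial
   prod_{r,s} t_{i_r, j_s}^{m_{r,s}} *)
Definition pmono (X Y : Type) (k l : nat) (M : 'M[nat]_(k, l))
  (ii : seq X) (jj : seq Y) : seq (X * Y) :=
  flatten [seq nseq (M r.1 s.1) (r.2, s.2)
          | r <- zip (enum 'I_k) ii, s <- zip (enum 'I_l) jj].

(* Phi_M(X,Y): the coefficient of the monomial n is the number of pairs of
   strictly increasing tuples i_1 < .. < i_k in X, j_1 < .. < j_l in Y with
   prod_{r,s} t_{i_r,j_s}^{m_{r,s}} = n.  (For packed M every such i_r, j_s
   occurs in n, so it suffices to draw them from the variables of n.) *)
Definition Phi d1 d2 (X : orderType d1) (Y : orderType d2) (k l : nat)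
  (M : 'M[nat]_(k, l)) : series (X * Y)%type := fun n =>
  (\sum_(ii <- all_tuples (undup [seq p.1 | p <- n]) k)
    \sum_(jj <- all_tuples (undup [seq p.2 | p <- n]) l)
      [&& sorted <%O ii, sorted <%O jj & seq_mset (pmono M ii jj) == n])%N%:R.

Definition mu (k n : nat) (a : 'I_k -> 'I_n) : 'M[nat]_(n, k) :=
  \matrix_(i, j) (i == a j : nat).

Definition surj (k n : nat) (a : 'I_k -> 'I_n) : bool :=
  [forall y, exists x, a x == y].

Definition adm (k k1 k2 : nat) (s1 : 'I_k -> 'I_k1) (s2 : 'I_k -> 'I_k2) : bool :=
  [&& surj s1, surj s2,
      [forall i : 'I_k, forall j : 'I_k, (i <= j)%N ==> (s1 i <= s1 j)%N] &
      [forall i : 'I_k, forall j : 'I_k, ((i < j)%N && (s1 i == s1 j)) ==> (s2 i < s2 j)%N]].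

(* iota_{(X1,X2),(Y1,Y2)} : A_{X1X2, Y1Y2} -> A_{X1,Y1} ^⊗ A_{X2,Y2}, the
   continuous algebra map t_{(x1,x2),(y1,y2)} |-> t_{x1,y1} ⊗ t_{x2,y2}.
   The coefficient of (n1, n2) in iota F is the sum of the coefficients of F
   at all monomials m sent to n1 ⊗ n2; such m have degree deg n1 and all
   their variables among the ((x1,x2),(y1,y2)) with (x1,y1) in n1 and
   (x2,y2) in n2, so the candidates below exhaust them (each once). *)
Definition iota_map d1 d2 e1 e2 (X1 : orderType d1) (X2 : orderType d2)
  (Y1 : orderType e1) (Y2 : orderType e2)
  (F : series ((X1 *l X2) * (Y1 *l Y2))%type) : series2 (X1 * Y1)%type (X2 * Y2)%type :=
  fun n1 n2 =>
  let C := [seq (((p.1, q.1) : X1 *l X2), ((p.2, q.2) : Y1 *l Y2))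
           | p <- undup n1, q <- undup n2] in
  let cands := undup [seq seq_mset t | t <- all_tuples C (size n1)] in
  \sum_(m <- cands | (seq_mset [seq (v.1.1, v.2.1) | v <- enum_mset m] == n1)
                     && (seq_mset [seq (v.1.2, v.2.2) | v <- enum_mset m] == n2))
     F m.

From HB Require Import structures.
From mathcomp Require Import all_boot all_order all_algebra.
From mathcomp Require Import finmap multiset.
Import Order.TTheory GRing.Theory.
Set Implicit Arguments.
Unset Strict Implicit.
Unset Printing Implicit Defensive.

(* A strictly increasing k-tuple ii of a lexicographic product A *l B amounts
   to strictly increasing tuples ii1, ii2 (of lengths k1, k2) of its distinct
   first and second coordinates, together with s1 : [k] -> [k1] and
   s2 : [k] -> [k2] such that ii r = (ii1 (s1 r), ii2 (s2 r)); lexicographic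
   monotonicity of ii is exactly admissibility of (s1, s2).  Decomposing so both
   the row tuple over X1X2 and the column tuple over Y1Y2 of a monomial of Phi_M
   splits its image under iota into a monomial over (X1, Y1) and one over
   (X2, Y2), and M evaluated on ii1 o s1, jj1 o t1 is mu(s1) M mu(t1)^T
   evaluated on ii1, jj1. *)

Section BigSeq.
Variables (R : Type) (idx : R) (op : Monoid.com_law idx).

Lemma reindex_seq_bij (A B : eqType) (s : seq A) (t : seq B) (P : pred A) (Q : pred B)
  (f : A -> B) (g : B -> A) (F : A -> R) :
  uniq s -> uniq t ->
  (forall x, x \in s -> P x -> (f x \in t) && Q (f x)) ->
  (forall y, y \in t -> Q y -> (g y \in s) && P (g y)) ->
  (forall x, x \in s -> P x -> g (f x) = x) ->
  (forall y, y \in t -> Q y -> f (g y) = y) ->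
  \big[op/idx]_(x <- s | P x) F x = \big[op/idx]_(y <- t | Q y) F (g y).
Proof.
move=> us ut fST gST gf fg.
rewrite -big_filter -[RHS]big_filter -(big_map g predT F).
apply: perm_big; apply: uniq_perm; first exact: filter_uniq.
  rewrite map_inj_in_uniq ?filter_uniq // => y1 y2.
  rewrite !mem_filter => /andP[q1 i1] /andP[q2 i2] e.
  by rewrite -(fg _ i1 q1) -(fg _ i2 q2) e.
move=> x; apply/idP/idP.
  rewrite mem_filter => /andP[px xs]; apply/mapP; exists (f x); last by rewrite gf.
  by move: (fST _ xs px) => /andP[a b]; rewrite mem_filter a b.
move=> /mapP[y]; rewrite mem_filter => /andP[qy yt] ->.
by move: (gST _ yt qy) => /andP[a b]; rewrite mem_filter a b.
Qed.

End BigSeq.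

Lemma eq_big_uniq_supp (R : eqType) (idx : R) (op : Monoid.com_law idx)
  (A : eqType) (s t : seq A) (F : A -> R) :
  uniq s -> uniq t ->
  {in s, forall x, F x != idx -> x \in t} -> {in t, forall x, F x != idx -> x \in s} ->
  \big[op/idx]_(x <- s) F x = \big[op/idx]_(x <- t) F x.
Proof.
move=> us ut st ts; apply: perm_big_supp; apply: uniq_perm; rewrite ?filter_uniq // => x.
by rewrite !mem_filter; apply/andP/andP => -[Fx xin]; split => //; [apply: st | apply: ts].
Qed.

Lemma mem_all_tuples (T : eqType) (s : seq T) k t :
  (t \in all_tuples s k) = (size t == k) && all (mem s) t.
Proof.
elim: k t => [|k IH] t /=; first by rewrite inE; case: t.
apply/allpairsP/idP.
  by move=> [[x u] /= [xs uk ->]]; move: uk; rewrite /= eqSS xs IH.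
case: t => [|x u] //=; rewrite eqSS => /and3P[uk xs au].
by exists (x, u); split=> //=; rewrite IH uk.
Qed.

Lemma uniq_all_tuples (T : eqType) (s : seq T) k :
  uniq s -> uniq (all_tuples s k).
Proof.
move=> us; elim: k => [|k IH] //=.
by apply: allpairs_uniq => // [[x u] [y v]] _ _ /= [-> ->].
Qed.

Lemma size_all_tuples (T : eqType) (s : seq T) k t : t \in all_tuples s k -> size t = k.
Proof. by rewrite mem_all_tuples => /andP[/eqP]. Qed.

Lemma inhabited_of_size (T : Type) (s : seq T) i : i < size s -> inhabited T.
Proof. by case: s => // x. Qed.

Definition sort_undup d (T : orderType d) (s : seq T) : seq T := sort <=%O (undup s).

Section SortUndup.
Variables (d : Order.disp_t) (T : orderType d).
Implicit Types s t : seq T.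

Lemma sort_undup_sorted s : sorted <%O (sort_undup s).
Proof. by rewrite /sort_undup sort_lt_sorted undup_uniq. Qed.

Lemma mem_sort_undup s : sort_undup s =i s.
Proof. by move=> x; rewrite /sort_undup mem_sort mem_undup. Qed.

Lemma sort_undup_uniq s : uniq (sort_undup s).
Proof. exact: lt_sorted_uniq (sort_undup_sorted s). Qed.

Lemma size_sort_undup s : size (sort_undup s) <= size s.
Proof. by rewrite /sort_undup size_sort size_undup. Qed.

Lemma sort_undup_eq s t : sorted <%O t -> t =i s -> sort_undup s = t.
Proof.
move=> st ts; apply: lt_sorted_eq => //; first exact: sort_undup_sorted.
by move=> x; rewrite mem_sort_undup ts.
Qed.

Lemma leq_index_sorted t u v : sorted <%O t -> u \in t -> v \in t ->
  (index u t <= index v t)%N = (u <= v)%O.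
Proof. by move=> st ut vt; rewrite -(lt_sorted_leq_nth u st) ?nth_index ?inE ?index_mem. Qed.

Lemma ltn_index_sorted t u v : sorted <%O t -> u \in t -> v \in t ->
  (index u t < index v t)%N = (u < v)%O.
Proof. by move=> st ut vt; rewrite -(lt_sorted_ltn_nth u st) ?nth_index ?inE ?index_mem. Qed.

End SortUndup.

(* [nths xs a] is the tuple xs o a; indices out of range are dropped. *)
Definition nths (T : Type) (xs : seq T) (a : seq nat) : seq T := pmap (onth xs) a.

Section Nths.
Variable T : Type.
Implicit Types (xs : seq T) (a : seq nat).

Lemma nths_nth (x0 : T) xs a :
  all (fun i => i < size xs) a -> nths xs a = map (nth x0 xs) a.
Proof.
elim: a => [|i a IH] //= /andP[hi ha].
by rewrite /nths /= onthE (nth_map x0) // -IH.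
Qed.

Lemma size_nths xs a : all (fun i => i < size xs) a -> size (nths xs a) = size a.
Proof.
case: xs => [|x0 xs] ha; last by rewrite (nths_nth x0) // size_map.
by case: a ha.
Qed.

End Nths.

Section NthsEq.
Variable T : eqType.
Implicit Types (xs : seq T) (a : seq nat).

Lemma mem_nths xs a :
  all (fun i => i < size xs) a -> (forall i, i < size xs -> i \in a) -> nths xs a =i xs.
Proof.
case: xs => [|x0 xs] ha hc; first by case: a ha {hc}.
rewrite (nths_nth x0) // => x; apply/mapP/idP.
  by move=> [i ia ->]; apply: mem_nth; exact: (allP ha).
by move=> /(nthP x0) [i hi <-]; exists i => //; exact: hc.
Qed.

Lemma nths_subset xs a : {subset nths xs a <= xs}.
Proof.
move=> x; rewrite /nths mem_pmap => /mapP [i _].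
elim: xs i => [|y xs IH] [|i] //=; first by case=> ->; rewrite mem_head.
by move/IH; rewrite inE => ->; rewrite orbT.
Qed.

Lemma nths_map_index xs u : {subset u <= xs} -> nths xs [seq index x xs | x <- u] = u.
Proof.
case: xs => [|x0 xs] hu; first by case: u hu => // x u /(_ x (mem_head _ _)).
rewrite (nths_nth x0); last by apply/allP => i /mapP [x /hu xu ->]; rewrite index_mem.
by rewrite -map_comp -[RHS]map_id; apply/eq_in_map => x /hu xu /=; rewrite nth_index.
Qed.

Lemma map_index_nths xs a :
  uniq xs -> all (fun i => i < size xs) a -> [seq index x xs | x <- nths xs a] = a.
Proof.
case: xs => [|x0 xs] uq ha; first by case: a ha.
rewrite (nths_nth x0) // -map_comp -[RHS]map_id; apply/eq_in_map => i hi.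
by rewrite /comp index_uniq //; exact: (allP ha).
Qed.

End NthsEq.

Definition ffun_vals k n (s : {ffun 'I_k -> 'I_n}) : seq nat :=
  [seq val (s r) | r <- enum 'I_k].

Section FfunVals.
Variables k n : nat.
Implicit Type s : {ffun 'I_k -> 'I_n}.

Lemma size_ffun_vals s : size (ffun_vals s) = k.
Proof. by rewrite size_map size_enum_ord. Qed.

Lemma nth_ffun_vals s (r : 'I_k) : nth 0 (ffun_vals s) r = s r.
Proof.
rewrite /ffun_vals (nth_map r) ?size_enum_ord //.
by congr (val (s _)); apply: val_inj; rewrite /= nth_enum_ord.
Qed.

Lemma ffun_vals_bounded s : all (fun i => i < n) (ffun_vals s).
Proof. by apply/allP => i /mapP [r _ ->]; exact: ltn_ord. Qed.

Lemma ffun_vals_inj : injective (@ffun_vals k n).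
Proof.
move=> s t e; apply/ffunP => r; apply: val_inj.
by move: (congr1 (nth 0 ^~ r) e); rewrite !nth_ffun_vals.
Qed.

Lemma ffun_vals_ffun (a : seq nat) (H : forall r : 'I_k, nth 0 a r < n) :
  size a = k -> ffun_vals [ffun r => Ordinal (H r)] = a.
Proof.
move=> sa; apply: (@eq_from_nth _ 0); first by rewrite size_ffun_vals.
move=> i; rewrite size_ffun_vals => hi.
by rewrite (nth_ffun_vals _ (Ordinal hi)) ffunE.
Qed.

End FfunVals.

Section Admissible.
Variables (k k1 k2 : nat) (s1 : {ffun 'I_k -> 'I_k1}) (s2 : {ffun 'I_k -> 'I_k2}).
Hypothesis s12_adm : adm s1 s2.

Lemma adm_surjl j : j < k1 -> j \in ffun_vals s1.
Proof.
move: s12_adm => /and4P[/forallP h _ _ _] hj.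
have /existsP [x /eqP hx] := h (Ordinal hj).
by apply/mapP; exists x; rewrite ?mem_enum // hx.
Qed.

Lemma adm_surjr j : j < k2 -> j \in ffun_vals s2.
Proof.
move: s12_adm => /and4P[_ /forallP h _ _] hj.
have /existsP [x /eqP hx] := h (Ordinal hj).
by apply/mapP; exists x; rewrite ?mem_enum // hx.
Qed.

Lemma adm_homo i j : i <= j -> j < k -> nth 0 (ffun_vals s1) i <= nth 0 (ffun_vals s1) j.
Proof.
move=> ij jk; have ik : i < k by apply: leq_ltn_trans jk.
rewrite (nth_ffun_vals _ (Ordinal ik)) (nth_ffun_vals _ (Ordinal jk)).
move: s12_adm => /and4P[_ _ /forallP h _].
by move: (h (Ordinal ik)) => /forallP /(_ (Ordinal jk)) /implyP; apply.
Qed.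

Lemma adm_fiber i j : i < j -> j < k -> nth 0 (ffun_vals s1) i = nth 0 (ffun_vals s1) j ->
  nth 0 (ffun_vals s2) i < nth 0 (ffun_vals s2) j.
Proof.
move=> ij jk; have ik : i < k by apply: ltn_trans jk.
rewrite !(nth_ffun_vals _ (Ordinal ik)) !(nth_ffun_vals _ (Ordinal jk)).
move: s12_adm => /and4P[_ _ _ /forallP h] e.
move: (h (Ordinal ik)) => /forallP /(_ (Ordinal jk)) /implyP; apply.
by rewrite /= ij /=; apply/eqP; apply: val_inj.
Qed.

End Admissible.

Lemma surj_map_index (T C : eqType) (ii : seq T) (p : T -> C) (d : seq C) k n
  (s : {ffun 'I_k -> 'I_n}) :
  size ii = k -> uniq d -> size d = n -> {subset d <= [seq p x | x <- ii]} ->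
  [seq index (p x) d | x <- ii] = ffun_vals s -> surj s.
Proof.
move=> hs ud dn sub sE; apply/forallP => y; have hy : y < size d by rewrite dn.
have [z0] := inhabited_of_size hy.
have /mapP [x /(nthP x) [r hr ex] nthE] := sub _ (mem_nth z0 hy); rewrite hs in hr.
apply/existsP; exists (Ordinal hr); apply/eqP/ord_inj.
by rewrite /= -(nth_ffun_vals s (Ordinal hr)) -sE (nth_map x) ?hs //= ex -nthE index_uniq.
Qed.

Lemma ffun_vals_map_index (T C : eqType) (ii : seq T) (p : T -> C) (d : seq C) k :
  size ii = k -> {subset [seq p x | x <- ii] <= d} ->
  exists s : {ffun 'I_k -> 'I_(size d)}, ffun_vals s = [seq index (p x) d | x <- ii].
Proof.
move=> hs sub.
have lt_index (r : 'I_k) : nth 0 [seq index (p x) d | x <- ii] r < size d.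
  have [x0] : inhabited T by apply: (inhabited_of_size (s := ii) (i := r)); rewrite hs.
  by rewrite (nth_map x0) ?hs // index_mem sub // map_f // mem_nth ?hs.
by exists [ffun r => Ordinal (lt_index r)]; rewrite ffun_vals_ffun // size_map.
Qed.

Definition zip_nths (A B : Type) (a b : seq nat) (xs : seq A) (ys : seq B) : seq (A * B) :=
  zip (nths xs a) (nths ys b).

Section LexiDecomposition.
Variables (dA dB : Order.disp_t) (A : orderType dA) (B : orderType dB).
Implicit Type ii : seq (A *l B).

Local Notation fsts ii := (sort_undup [seq x.1 | x <- ii]).
Local Notation snds ii := (sort_undup [seq x.2 | x <- ii]).

(* ii r = ((fsts ii)`_(a r), (snds ii)`_(b r)), with k1 and k2 the numbers of
   distinct first and second coordinates of ii. *)
Definition has_shape ii (k1 k2 : nat) (a b : seq nat) : bool :=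
  [&& size (fsts ii) == k1, size (snds ii) == k2,
      [seq index x.1 (fsts ii) | x <- ii] == a &
      [seq index x.2 (snds ii) | x <- ii] == b].

Lemma zip_nths_shape ii k1 k2 a b : has_shape ii k1 k2 a b ->
  zip_nths a b (fsts ii) (snds ii) = ii.
Proof.
move=> /and4P[_ _ /eqP <- /eqP <-]; rewrite /zip_nths.
rewrite !(map_comp (index^~ _) (fun x : A * B => _)) !nths_map_index ?zip_unzip //.
  by move=> x; rewrite mem_sort_undup.
by move=> x; rewrite mem_sort_undup.
Qed.

Lemma has_shape_all_tuples (UA : seq A) (UB : seq B) k ii k1 k2 a b :
  ii \in all_tuples [seq ((x, y) : A *l B) | x <- UA, y <- UB] k -> has_shape ii k1 k2 a b ->
  (fsts ii \in all_tuples UA k1) && (snds ii \in all_tuples UB k2).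
Proof.
rewrite mem_all_tuples => /andP[_ /allP hii] /and4P[h1 h2 _ _].
rewrite !mem_all_tuples h1 h2 /=; apply/andP; split; apply/allP => z;
  by rewrite mem_sort_undup => /mapP [x /hii /allpairsP [[u v] [/= hu hv ->]] ->].
Qed.

Lemma shape_adm ii k k1 k2 (s1 : {ffun 'I_k -> 'I_k1}) (s2 : {ffun 'I_k -> 'I_k2}) :
  size ii = k -> sorted <%O ii -> has_shape ii k1 k2 (ffun_vals s1) (ffun_vals s2) ->
  adm s1 s2.
Proof.
set d1 := fsts ii; set d2 := snds ii.
move=> hs so /and4P[/eqP e1 /eqP e2 /eqP g1 /eqP g2].
have E1 x0 (r : 'I_k) : nat_of_ord (s1 r) = index (nth x0 ii r).1 d1.
  by rewrite -nth_ffun_vals -g1 (nth_map x0) // hs.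
have E2 x0 (r : 'I_k) : nat_of_ord (s2 r) = index (nth x0 ii r).2 d2.
  by rewrite -nth_ffun_vals -g2 (nth_map x0) // hs.
have in1 x0 (r : 'I_k) : (nth x0 ii r).1 \in d1.
  by rewrite mem_sort_undup; apply: map_f; rewrite mem_nth // hs.
have in2 x0 (r : 'I_k) : (nth x0 ii r).2 \in d2.
  by rewrite mem_sort_undup; apply: map_f; rewrite mem_nth // hs.
have sub1 : {subset d1 <= [seq x.1 | x <- ii]} by move=> z; rewrite mem_sort_undup.
have sub2 : {subset d2 <= [seq x.2 | x <- ii]} by move=> z; rewrite mem_sort_undup.
apply/and4P; split.
- exact: (surj_map_index hs (sort_undup_uniq _) e1 sub1 g1).
- exact: (surj_map_index hs (sort_undup_uniq _) e2 sub2 g2).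
- apply/forallP => i; apply/forallP => j; apply/implyP => ij.
  have [x0] : inhabited (A *l B) by apply: (inhabited_of_size (s := ii) (i := i)); rewrite hs.
  rewrite !(E1 x0) leq_index_sorted ?sort_undup_sorted ?in1 //.
  have : (nth x0 ii i <= nth x0 ii j)%O by rewrite (lt_sorted_leq_nth x0 so) ?inE ?hs.
  by rewrite leEprodlexi => /andP[].
- apply/forallP => i; apply/forallP => j; apply/implyP => /andP[ij /eqP eij].
  have [x0] : inhabited (A *l B) by apply: (inhabited_of_size (s := ii) (i := i)); rewrite hs.
  rewrite !(E2 x0) ltn_index_sorted ?sort_undup_sorted ?in2 //.
  have e : (nth x0 ii i).1 = (nth x0 ii j).1.
    by rewrite -(nth_index x0.1 (in1 x0 i)) -(nth_index x0.1 (in1 x0 j)) -!E1 eij.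
  have : (nth x0 ii i < nth x0 ii j)%O by rewrite (lt_sorted_ltn_nth x0 so) ?inE ?hs.
  by rewrite ltEprodlexi e lexx.
Qed.

Section ZipNths.
Variables (k k1 k2 : nat) (s1 : {ffun 'I_k -> 'I_k1}) (s2 : {ffun 'I_k -> 'I_k2}).
Variables (ii1 : seq A) (ii2 : seq B).
Hypotheses (size_ii1 : size ii1 = k1) (size_ii2 : size ii2 = k2).

Local Notation a := (ffun_vals s1).
Local Notation b := (ffun_vals s2).
Local Notation zn := (zip_nths a b ii1 ii2 : seq (A *l B)).

Let a_bounded : all (fun i => i < size ii1) a.
Proof. by rewrite size_ii1 ffun_vals_bounded. Qed.

Let b_bounded : all (fun i => i < size ii2) b.
Proof. by rewrite size_ii2 ffun_vals_bounded. Qed.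

Lemma size_zip_nths : size zn = k.
Proof. by rewrite size_zip !size_nths // !size_ffun_vals minnn. Qed.

Lemma map_fst_zip_nths : [seq x.1 | x <- zn] = nths ii1 a.
Proof. by rewrite -/(unzip1 _) unzip1_zip // !size_nths // !size_ffun_vals. Qed.

Lemma map_snd_zip_nths : [seq x.2 | x <- zn] = nths ii2 b.
Proof. by rewrite -/(unzip2 _) unzip2_zip // !size_nths // !size_ffun_vals. Qed.

Lemma zip_nths_all_tuples (UA : seq A) (UB : seq B) :
  ii1 \in all_tuples UA k1 -> ii2 \in all_tuples UB k2 ->
  zn \in all_tuples [seq ((x, y) : A *l B) | x <- UA, y <- UB] k.
Proof.
rewrite !mem_all_tuples => /andP[_ /allP h1] /andP[_ /allP h2].
rewrite size_zip_nths eqxx /=; apply/allP => [[x y]] hxy; apply/allpairsP.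
exists (x, y); split => //.
  by apply/h1/(@nths_subset _ _ a); rewrite -map_fst_zip_nths; apply/mapP; exists (x, y).
by apply/h2/(@nths_subset _ _ b); rewrite -map_snd_zip_nths; apply/mapP; exists (x, y).
Qed.

Hypotheses (s12_adm : adm s1 s2) (sorted_ii1 : sorted <%O ii1) (sorted_ii2 : sorted <%O ii2).

Lemma fsts_zip_nths : fsts zn = ii1.
Proof.
rewrite map_fst_zip_nths; apply: sort_undup_eq => // x; rewrite mem_nths // => i hi.
by apply: (adm_surjl s12_adm); rewrite -size_ii1.
Qed.

Lemma snds_zip_nths : snds zn = ii2.
Proof.
rewrite map_snd_zip_nths; apply: sort_undup_eq => // x; rewrite mem_nths // => i hi.
by apply: (adm_surjr s12_adm); rewrite -size_ii2.
Qed.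

Lemma has_shape_zip_nths : has_shape zn k1 k2 a b.
Proof.
rewrite /has_shape fsts_zip_nths snds_zip_nths size_ii1 size_ii2 !eqxx /=.
rewrite !(map_comp (index^~ _) (fun x : A * B => _)) map_fst_zip_nths map_snd_zip_nths.
by rewrite !map_index_nths ?eqxx //; exact: lt_sorted_uniq.
Qed.

(* Positions sharing their first coordinate are ordered by the second one. *)
Lemma sorted_zip_nths : sorted <%O zn.
Proof.
case: (posnP k) => [k0|kpos].
  by have /size0nil -> : size zn = 0 by rewrite size_zip_nths k0.
have [x0] : inhabited A.
  by apply: (inhabited_of_size (s := ii1) (i := s1 (Ordinal kpos))); rewrite size_ii1.
have [y0] : inhabited B.
  by apply: (inhabited_of_size (s := ii2) (i := s2 (Ordinal kpos))); rewrite size_ii2.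
have lta j : j < k -> nth 0 a j < size ii1.
  by move=> hj; rewrite size_ii1 (nth_ffun_vals s1 (Ordinal hj)).
have ltb j : j < k -> nth 0 b j < size ii2.
  by move=> hj; rewrite size_ii2 (nth_ffun_vals s2 (Ordinal hj)).
have nth_zn j : j < k -> nth (x0, y0) zn j = (nth x0 ii1 (nth 0 a j), nth y0 ii2 (nth 0 b j)).
  move=> hj; rewrite /zip_nths nth_zip; last by rewrite !size_nths // !size_ffun_vals.
  by rewrite (nths_nth x0) // (nths_nth y0) // !(nth_map 0) ?size_ffun_vals.
apply/(sortedP (x0, y0)) => i; rewrite size_zip_nths => hi; have hi' := ltnW hi.
rewrite !nth_zn // ltEprodlexi /=.
have := adm_homo s12_adm (leqnSn i) hi; rewrite leq_eqVlt => /orP[/eqP e|lt].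
  rewrite e lexx /= (lt_sorted_ltn_nth y0 sorted_ii2) ?inE ?ltb //.
  exact: (adm_fiber s12_adm).
have hlt : (nth x0 ii1 (nth 0 a i) < nth x0 ii1 (nth 0 a i.+1))%O.
  by rewrite (lt_sorted_ltn_nth x0 sorted_ii1) ?inE ?lta.
by rewrite (ltW hlt) (lt_geF hlt).
Qed.

End ZipNths.

Local Open Scope ring_scope.

Lemma sum_zip_nths (UA : seq A) (UB : seq B) k k1 k2 (s1 : {ffun 'I_k -> 'I_k1})
  (s2 : {ffun 'I_k -> 'I_k2}) (F : seq (A *l B) -> rat) :
  uniq UA -> uniq UB -> adm s1 s2 ->
  \sum_(ii1 <- all_tuples UA k1 | sorted <%O ii1)
    \sum_(ii2 <- all_tuples UB k2 | sorted <%O ii2)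
      F (zip_nths (ffun_vals s1) (ffun_vals s2) ii1 ii2)
  = \sum_(ii <- all_tuples [seq ((x, y) : A *l B) | x <- UA, y <- UB] k |
          sorted <%O ii && has_shape ii k1 k2 (ffun_vals s1) (ffun_vals s2)) F ii.
Proof.
move=> uA uB s12_adm.
set zn := fun p : seq A * seq B => zip_nths (ffun_vals s1) (ffun_vals s2) p.1 p.2.
transitivity (\sum_(p <- [seq (u, v) | u <- all_tuples UA k1, v <- all_tuples UB k2] |
    sorted <%O p.1 && sorted <%O p.2) F (zn p)).
  rewrite [LHS]big_mkcond [RHS]big_mkcond big_allpairs /=; apply: eq_bigr => u _.
  by case: (sorted <%O u) => /=; [rewrite big_mkcond | rewrite big1].
symmetry; apply: (@reindex_seq_bij _ _ _ _ _ _ _ _ _ (fun ii => (fsts ii, snds ii)) zn).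
- apply: uniq_all_tuples; apply: allpairs_uniq => // [[x y] [x' y']] _ _ /= [-> ->] //.
- apply: allpairs_uniq; try exact: uniq_all_tuples.
  by move=> [x y] [x' y'] _ _ /= [-> ->].
- move=> ii hii /andP[_ sh]; rewrite /= !sort_undup_sorted !andbT.
  by have /andP[h1 h2] := has_shape_all_tuples hii sh; exact: (allpairs_f (@pair _ _) h1 h2).
- move=> [ii1 ii2] /allpairsP [[u v] [/= hu hv [-> ->]]] /andP[/= so1 so2].
  have sz1 := size_all_tuples hu; have sz2 := size_all_tuples hv.
  by rewrite zip_nths_all_tuples ?sorted_zip_nths ?has_shape_zip_nths.
- by move=> ii _ /andP[_ sh]; rewrite /zn /= (zip_nths_shape sh).
- move=> [ii1 ii2] /allpairsP [[u v] [/= hu hv [-> ->]]] /andP[/= so1 so2].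
  have sz1 := size_all_tuples hu; have sz2 := size_all_tuples hv.
  by rewrite fsts_zip_nths ?snds_zip_nths.
Qed.

(* Each sorted ii has exactly one shape, and that shape is admissible. *)
Lemma sum_has_shape ii k (x : rat) :
  size ii = k -> sorted <%O ii ->
  \sum_(k1 < k.+1) \sum_(k2 < k.+1) \sum_(s1 : {ffun 'I_k -> 'I_k1})
    \sum_(s2 : {ffun 'I_k -> 'I_k2} | adm s1 s2)
      ((has_shape ii k1 k2 (ffun_vals s1) (ffun_vals s2))%:R * x) = x.
Proof.
move=> hs so; rewrite /has_shape.
set d1 := fsts ii; set d2 := snds ii.
set a := [seq index _ d1 | _ <- ii]; set b := [seq index _ d2 | _ <- ii].
have K1 : (size d1 < k.+1)%N by rewrite ltnS -hs (leq_trans (size_sort_undup _)) ?size_map.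
have K2 : (size d2 < k.+1)%N by rewrite ltnS -hs (leq_trans (size_sort_undup _)) ?size_map.
rewrite (bigD1 (Ordinal K1)) //= [X in _ + X]big1 ?addr0; last first.
  move=> k1 ne; do 3 (apply: big1 => ? _).
  suff -> : (size d1 == k1) = false by rewrite mul0r.
  by apply/eqP => e; move: ne; rewrite -val_eqE /= e eqxx.
rewrite (bigD1 (Ordinal K2)) //= [X in _ + X]big1 ?addr0; last first.
  move=> k2 ne; do 2 (apply: big1 => ? _).
  suff -> : (size d2 == k2) = false by rewrite andbF mul0r.
  by apply/eqP => e; move: ne; rewrite -val_eqE /= e eqxx.
rewrite !eqxx /=.
have [S1 g1] : exists S1 : {ffun 'I_k -> 'I_(size d1)}, ffun_vals S1 = a.
  by apply: ffun_vals_map_index => // z; rewrite /d1 mem_sort_undup.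
have [S2 g2] : exists S2 : {ffun 'I_k -> 'I_(size d2)}, ffun_vals S2 = b.
  by apply: ffun_vals_map_index => // z; rewrite /d2 mem_sort_undup.
have S12_adm : adm S1 S2.
  by apply: (shape_adm hs so); rewrite /has_shape -/d1 -/d2 -/a -/b g1 g2 !eqxx.
rewrite (bigD1 S1) //= [X in _ + X]big1 ?addr0; last first.
  move=> s1 ne; apply: big1 => s2 _.
  by rewrite -g1 (inj_eq (@ffun_vals_inj _ _)) [S1 == _]eq_sym (negbTE ne) mul0r.
rewrite (bigD1 S2) //= [X in _ + X]big1 ?addr0; last first.
  move=> s2 /andP[_ ne].
  by rewrite -g2 (inj_eq (@ffun_vals_inj _ _)) [S2 == _]eq_sym (negbTE ne) andbF mul0r.
by rewrite g1 g2 !eqxx mul1r.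
Qed.

Lemma sum_sorted_lexi (UA : seq A) (UB : seq B) k (F : seq (A *l B) -> rat) :
  uniq UA -> uniq UB ->
  \sum_(ii <- all_tuples [seq ((x, y) : A *l B) | x <- UA, y <- UB] k | sorted <%O ii) F ii =
  \sum_(k1 < k.+1) \sum_(k2 < k.+1) \sum_(s1 : {ffun 'I_k -> 'I_k1})
    \sum_(s2 : {ffun 'I_k -> 'I_k2} | adm s1 s2)
   \sum_(ii1 <- all_tuples UA k1 | sorted <%O ii1)
    \sum_(ii2 <- all_tuples UB k2 | sorted <%O ii2)
      F (zip_nths (ffun_vals s1) (ffun_vals s2) ii1 ii2).
Proof.
move=> uA uB.
set T := all_tuples _ k.
transitivity (\sum_(ii <- T) \sum_(k1 < k.+1) \sum_(k2 < k.+1)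
    \sum_(s1 : {ffun 'I_k -> 'I_k1}) \sum_(s2 : {ffun 'I_k -> 'I_k2} | adm s1 s2)
      ((sorted <%O ii && has_shape ii k1 k2 (ffun_vals s1) (ffun_vals s2))%:R * F ii)).
  rewrite big_mkcond; apply: eq_big_seq => ii /size_all_tuples hs.
  case: ifP => so; first by rewrite /= (sum_has_shape (F ii) hs so).
  by symmetry; do 4 (apply: big1 => ? _); rewrite mul0r.
rewrite exchange_big; apply: eq_bigr => k1 _.
rewrite exchange_big; apply: eq_bigr => k2 _.
rewrite exchange_big; apply: eq_bigr => s1 _.
rewrite exchange_big; apply: eq_bigr => s2 s12_adm.
rewrite sum_zip_nths // [RHS]big_mkcond; apply: eq_bigr => ii _.
by case: ifP; rewrite ?mul1r ?mul0r.
Qed.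

Lemma sum_sorted_lexi_proj (UA : seq A) (UB : seq B) k (G : seq A -> seq B -> rat) :
  uniq UA -> uniq UB ->
  \sum_(ii <- all_tuples [seq ((x, y) : A *l B) | x <- UA, y <- UB] k | sorted <%O ii)
    G [seq x.1 | x <- ii] [seq x.2 | x <- ii] =
  \sum_(k1 < k.+1) \sum_(k2 < k.+1) \sum_(s1 : {ffun 'I_k -> 'I_k1})
    \sum_(s2 : {ffun 'I_k -> 'I_k2} | adm s1 s2)
   \sum_(ii1 <- all_tuples UA k1 | sorted <%O ii1)
    \sum_(ii2 <- all_tuples UB k2 | sorted <%O ii2)
      G (nths ii1 (ffun_vals s1)) (nths ii2 (ffun_vals s2)).
Proof.
move=> uA uB; rewrite (sum_sorted_lexi _ _ uA uB).
apply: eq_bigr => k1 _; apply: eq_bigr => k2 _; apply: eq_bigr => s1 _.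
apply: eq_bigr => s2 _; rewrite big_seq_cond [RHS]big_seq_cond.
apply: eq_bigr => ii1 /andP[/size_all_tuples sz1 _].
rewrite big_seq_cond [RHS]big_seq_cond.
apply: eq_bigr => ii2 /andP[/size_all_tuples sz2 _].
by rewrite map_fst_zip_nths ?map_snd_zip_nths.
Qed.

End LexiDecomposition.

Lemma zip_enum_ord (T : Type) (x0 : T) n (ii : seq T) : size ii = n ->
  zip (enum 'I_n) ii = [seq ((r : 'I_n), nth x0 ii r) | r <- enum 'I_n].
Proof.
move=> hs; rewrite -(zip_map id (fun r : 'I_n => nth x0 ii r)) map_id.
congr zip; rewrite (map_comp (nth x0 ii) val) val_enum_ord -hs.
by rewrite -/(mkseq _ _) mkseq_nth.
Qed.

Lemma map_pmono (X Y X' Y' : Type) k l (M : 'M[nat]_(k, l)) (ii : seq X) (jj : seq Y) (f : X -> X') (g : Y -> Y') :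
  [seq (f v.1, g v.2) | v <- pmono M ii jj] = pmono M (map f ii) (map g jj).
Proof.
have zip_mapr (S T T' : Type) (h : T -> T') (s : seq S) (t : seq T) :
    zip s (map h t) = [seq (p.1, h p.2) | p <- zip s t].
  by elim: s t => [|x s IH] [|y t] //=; rewrite IH.
rewrite /pmono map_flatten map_allpairs !zip_mapr allpairs_mapl allpairs_mapr /=.
by congr flatten; apply: eq_allpairs => r s /=; rewrite map_nseq.
Qed.

Lemma count_pmono (X Y : eqType) k l (M : 'M[nat]_(k, l)) (ii : seq X) (jj : seq Y) z x0 y0 :
  size ii = k -> size jj = l ->
  count_mem z (pmono M ii jj) =
  \sum_(r < k) \sum_(s < l) M r s * ((nth x0 ii r, nth y0 jj s) == z).
Proof.
move=> hi hj.
rewrite /pmono count_flatten sumn_map big_allpairs_dep (zip_enum_ord x0 hi) (zip_enum_ord y0 hj).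
rewrite big_map big_enum /=; apply: eq_bigr => r _.
by rewrite big_map big_enum /=; apply: eq_bigr => s _; rewrite count_nseq mulnC.
Qed.

Lemma pmono_fst_subset (X Y : eqType) k l (M : 'M[nat]_(k, l)) (ii : seq X) (jj : seq Y) :
  packed M -> size ii = k -> size jj = l -> {subset ii <= [seq v.1 | v <- pmono M ii jj]}.
Proof.
move=> /andP[/forallP hr _] hi hj x /(nthP x) [r rk <-].
rewrite hi in rk; have /existsP [s hs] := hr (Ordinal rk).
have [y] : inhabited Y by apply: (inhabited_of_size (s := jj) (i := s)); rewrite hj.
apply/mapP; exists (nth x ii r, nth y jj s) => //.
apply/count_memPn => /eqP; apply/negP; rewrite -lt0n (count_pmono _ _ x y hi hj).
rewrite (bigD1 (Ordinal rk)) //= (bigD1 s) //= eqxx muln1.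
by rewrite -addnA ltn_addr // lt0n.
Qed.

Lemma pmono_snd_subset (X Y : eqType) k l (M : 'M[nat]_(k, l)) (ii : seq X) (jj : seq Y) :
  packed M -> size ii = k -> size jj = l -> {subset jj <= [seq v.2 | v <- pmono M ii jj]}.
Proof.
move=> /andP[_ /forallP hc] hi hj y /(nthP y) [s sl <-].
rewrite hj in sl; have /existsP [r hr] := hc (Ordinal sl).
have [x] : inhabited X by apply: (inhabited_of_size (s := ii) (i := r)); rewrite hi.
apply/mapP; exists (nth x ii r, nth y jj s) => //.
apply/count_memPn => /eqP; apply/negP; rewrite -lt0n (count_pmono _ _ x y hi hj).
rewrite (bigD1 r) //= (bigD1 (Ordinal sl)) //= eqxx muln1.
by rewrite -addnA ltn_addr // lt0n.
Qed.

Lemma mu_mulmx_trmx_muE k l k1 l1 (M : 'M[nat]_(k, l)) (s : {ffun 'I_k -> 'I_k1})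
  (t : {ffun 'I_l -> 'I_l1}) a b :
  (mu s *m M *m (mu t)^T)%R a b = \sum_(r < k) \sum_(j < l) (a == s r) * M r j * (b == t j).
Proof.
rewrite mxE; under eq_bigr => j _ do rewrite !mxE.
under eq_bigr => j _ do under eq_bigr => r _ do rewrite mxE.
rewrite exchange_big /=; apply: eq_bigr => j _.
by rewrite mulr_suml; apply: eq_bigr.
Qed.

Lemma perm_pmono_mu (X Y : eqType) k l k1 l1 (M : 'M[nat]_(k, l)) (s : {ffun 'I_k -> 'I_k1})
  (t : {ffun 'I_l -> 'I_l1}) (ii : seq X) (jj : seq Y) :
  size ii = k1 -> size jj = l1 ->
  perm_eq (pmono (mu s *m M *m (mu t)^T)%R ii jj)
          (pmono M (nths ii (ffun_vals s)) (nths jj (ffun_vals t))).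
Proof.
move=> hi hj.
have a1 : all (fun i => i < size ii) (ffun_vals s) by rewrite hi ffun_vals_bounded.
have a2 : all (fun i => i < size jj) (ffun_vals t) by rewrite hj ffun_vals_bounded.
apply/allP => z _; apply/eqP.
rewrite (count_pmono _ _ z.1 z.2 hi hj) (count_pmono _ _ z.1 z.2); last 2 first.
- by rewrite size_nths // size_ffun_vals.
- by rewrite size_nths // size_ffun_vals.
rewrite (nths_nth z.1) // (nths_nth z.2) //.
transitivity (\sum_(a < k1) \sum_(b < l1) \sum_(r < k) \sum_(j < l)
   (a == s r) * M r j * (b == t j) * ((nth z.1 ii a, nth z.2 jj b) == z)).
  apply: eq_bigr => a _; apply: eq_bigr => b _.
  by rewrite mu_mulmx_trmx_muE big_distrl; apply: eq_bigr => r _; rewrite big_distrl.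
rewrite exchange_big; under eq_bigr => b _ do rewrite exchange_big.
rewrite exchange_big; apply: eq_bigr => r _.
under eq_bigr => b _ do rewrite exchange_big.
rewrite exchange_big; apply: eq_bigr => j _.
rewrite (bigD1 (t j)) //= [X in _ + X]big1 ?addn0; last first.
  by move=> b ne; apply: big1 => a _; rewrite (negbTE ne) !muln0 mul0n.
rewrite (bigD1 (s r)) //= [X in _ + X]big1 ?addn0; last first.
  by move=> a ne; rewrite (negbTE ne).
by rewrite !eqxx mul1n muln1 !(nth_map 0) ?size_ffun_vals // !nth_ffun_vals.
Qed.

Local Open Scope ring_scope.

Definition pmono_eq (X Y : choiceType) k l (M : 'M[nat]_(k, l)) (n : {mset (X * Y)%type}%mset)
  (ii : seq X) (jj : seq Y) : bool := perm_eq (pmono M ii jj) n.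

Lemma seq_mset_eqE (T : choiceType) (s : seq T) (n : {mset T}%mset) :
  (seq_mset s == n) = perm_eq s n.
Proof. by rewrite -{1}(seq_mset_id n); apply/eqP/idP => /eq_seq_msetP. Qed.

Lemma Phi_mu d d' (X : orderType d) (Y : orderType d') k l k1 l1 (M : 'M[nat]_(k, l))
  (s : {ffun 'I_k -> 'I_k1}) (t : {ffun 'I_l -> 'I_l1}) (n : {mset (X * Y)%type}%mset) :
  Phi (X := X) (Y := Y) (mu s *m M *m (mu t)^T) n =
  \sum_(ii <- all_tuples (undup [seq p.1 | p <- n]) k1 | sorted <%O ii)
    \sum_(jj <- all_tuples (undup [seq p.2 | p <- n]) l1 | sorted <%O jj)
      (pmono_eq M n (nths ii (ffun_vals s)) (nths jj (ffun_vals t)))%:R.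
Proof.
rewrite /Phi natr_sum [RHS]big_mkcond; apply: eq_big_seq => ii /size_all_tuples hi.
rewrite natr_sum; case: (boolP (sorted <%O ii)) => si; last first.
  by rewrite big1 // => jj _; rewrite (negbTE si).
rewrite [RHS]big_mkcond; apply: eq_big_seq => jj /size_all_tuples hj.
case: (boolP (sorted <%O jj)) => //= sj.
by rewrite seq_mset_eqE (permPl (perm_pmono_mu M s t hi hj)).
Qed.

Section IotaPhi.
Variables (d1 d2 e1 e2 : Order.disp_t)
  (X1 : orderType d1) (X2 : orderType d2) (Y1 : orderType e1) (Y2 : orderType e2)
  (k l : nat) (M : 'M[nat]_(k, l)) (hM : packed M)
  (n1 : {mset (X1 * Y1)%type}%mset) (n2 : {mset (X2 * Y2)%type}%mset).

Local Notation XY := ((X1 *l X2) * (Y1 *l Y2))%type.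

Let UX := [seq ((x, y) : X1 *l X2) | x <- undup [seq p.1 | p <- n1], y <- undup [seq p.1 | p <- n2]].
Let UY := [seq ((x, y) : Y1 *l Y2) | x <- undup [seq p.2 | p <- n1], y <- undup [seq p.2 | p <- n2]].
Let cands := undup [seq seq_mset t | t <- all_tuples
  [seq (((p.1, q.1) : X1 *l X2), ((p.2, q.2) : Y1 *l Y2)) | p <- undup n1, q <- undup n2]
  (size n1)].

Let uniq_UX : uniq UX.
Proof. by apply: allpairs_uniq; rewrite ?undup_uniq // => [[x y] [x' y']] _ _ /= [-> ->]. Qed.

Let uniq_UY : uniq UY.
Proof. by apply: allpairs_uniq; rewrite ?undup_uniq // => [[x y] [x' y']] _ _ /= [-> ->]. Qed.

Definition in_iota_fiber (m : {mset XY}%mset) : bool :=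
  (seq_mset [seq (v.1.1, v.2.1) | v <- m] == n1) &&
  (seq_mset [seq (v.1.2, v.2.2) | v <- m] == n2).

Lemma in_iota_fiber_mem m v : in_iota_fiber m -> v \in (m : seq XY) ->
  [/\ v.1 \in UX, v.2 \in UY &
      v \in [seq (((p.1, q.1) : X1 *l X2), ((p.2, q.2) : Y1 *l Y2)) | p <- undup n1, q <- undup n2]].
Proof.
rewrite /in_iota_fiber !seq_mset_eqE => /andP[h1 h2] vm.
have a1 : (v.1.1, v.2.1) \in (n1 : seq _) by rewrite -(perm_mem h1); apply: map_f.
have a2 : (v.1.2, v.2.2) \in (n2 : seq _) by rewrite -(perm_mem h2); apply: map_f.
case: v vm a1 a2 => [[x1 x2] [y1 y2]] /= _ a1 a2; split.
- by apply/allpairsP; exists (x1, x2); rewrite !mem_undup; split => //; apply/mapP;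
    [exists (x1, y1) | exists (x2, y2)].
- by apply/allpairsP; exists (y1, y2); rewrite !mem_undup; split => //; apply/mapP;
    [exists (x1, y1) | exists (x2, y2)].
- by apply/allpairsP; exists ((x1, y1), (x2, y2)); rewrite !mem_undup.
Qed.

Lemma in_iota_fiber_pmono (ii : seq (X1 *l X2)) (jj : seq (Y1 *l Y2)) :
  in_iota_fiber (seq_mset (pmono M ii jj)) =
  pmono_eq M n1 [seq x.1 | x <- ii] [seq x.1 | x <- jj] &&
  pmono_eq M n2 [seq x.2 | x <- ii] [seq x.2 | x <- jj].
Proof.
rewrite /in_iota_fiber !seq_mset_eqE !(permPl (perm_map _ (perm_eq_seq_mset _))).
by rewrite (map_pmono M ii jj fst fst) (map_pmono M ii jj snd snd).
Qed.

Lemma iota_fiber_cands m : in_iota_fiber m -> m \in cands.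
Proof.
move=> fib; rewrite mem_undup -[m]seq_mset_id; apply: map_f.
rewrite mem_all_tuples; apply/andP; split.
  move: (fib); rewrite /in_iota_fiber !seq_mset_eqE => /andP[h1 _].
  by rewrite -(perm_size h1) size_map.
by apply/allP => v vm; case: (in_iota_fiber_mem fib vm).
Qed.

Lemma sum_iota_fiber_eq q :
  (\sum_(m <- cands | in_iota_fiber m) (q == m))%N = in_iota_fiber q.
Proof.
case: (boolP (in_iota_fiber q)) => fib; last first.
  by apply: big1 => m fm; case: eqP => // qm; move: fib; rewrite qm fm.
rewrite big_mkcond (bigD1_seq q) ?iota_fiber_cands ?undup_uniq //= fib eqxx.
by rewrite big1 ?addn0 // => m mq; case: ifP => // _; rewrite eq_sym (negbTE mq).
Qed.

Lemma Phi_iota_fiber m : in_iota_fiber m ->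
  Phi (X := X1 *l X2) (Y := Y1 *l Y2) M m =
  (\sum_(ii <- all_tuples UX k) \sum_(jj <- all_tuples UY l)
    [&& sorted <%O ii, sorted <%O jj & seq_mset (pmono M ii jj) == m])%N%:R.
Proof.
move=> fib; rewrite /Phi; congr (_%:R).
have mem_m (ii : seq (X1 *l X2)) (jj : seq (Y1 *l Y2)) :
    size ii = k -> size jj = l -> seq_mset (pmono M ii jj) == m ->
    {subset ii <= [seq v.1 | v <- (m : seq XY)]} /\ {subset jj <= [seq v.2 | v <- (m : seq XY)]}.
  rewrite seq_mset_eqE => hi hj pe; split => x xi.
    by rewrite -(perm_mem (perm_map _ pe)); apply: (pmono_fst_subset hM hi hj).
  by rewrite -(perm_mem (perm_map _ pe)); apply: (pmono_snd_subset hM hi hj).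
transitivity (\sum_(ii <- all_tuples (undup [seq v.1 | v <- (m : seq XY)]) k)
    \sum_(jj <- all_tuples UY l)
      [&& sorted <%O ii, sorted <%O jj & seq_mset (pmono M ii jj) == m])%N.
  apply: eq_big_seq => ii /size_all_tuples hi.
  apply: eq_big_uniq_supp; rewrite ?uniq_all_tuples ?undup_uniq //.
  - move=> jj /size_all_tuples hj; rewrite eqb0 negbK => /and3P[_ _ /(mem_m _ _ hi hj) [_ sub]].
    rewrite mem_all_tuples hj eqxx; apply/allP => y /sub /mapP [v vm ->].
    by case: (in_iota_fiber_mem fib vm).
  - move=> jj /size_all_tuples hj; rewrite eqb0 negbK => /and3P[_ _ /(mem_m _ _ hi hj) [_ sub]].
    by rewrite mem_all_tuples hj eqxx; apply/allP => y /sub; rewrite /= mem_undup.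
apply: eq_big_uniq_supp; rewrite ?uniq_all_tuples ?undup_uniq //.
- move=> ii /size_all_tuples hi; rewrite sum_nat_seq_neq0 => /hasP [jj /size_all_tuples hj].
  rewrite /= eqb0 negbK => /and3P[_ _ /(mem_m _ _ hi hj) [sub _]].
  rewrite mem_all_tuples hi eqxx; apply/allP => x /sub /mapP [v vm ->].
  by case: (in_iota_fiber_mem fib vm).
- move=> ii /size_all_tuples hi; rewrite sum_nat_seq_neq0 => /hasP [jj /size_all_tuples hj].
  rewrite /= eqb0 negbK => /and3P[_ _ /(mem_m _ _ hi hj) [sub _]].
  by rewrite mem_all_tuples hi eqxx; apply/allP => x /sub; rewrite /= mem_undup.
Qed.

Lemma iota_Phi_lexi :
  iota_map (Phi (X := X1 *l X2) (Y := Y1 *l Y2) M) n1 n2 =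
  \sum_(ii <- all_tuples UX k | sorted <%O ii) \sum_(jj <- all_tuples UY l | sorted <%O jj)
    (pmono_eq M n1 [seq x.1 | x <- ii] [seq x.1 | x <- jj])%:R *
    (pmono_eq M n2 [seq x.2 | x <- ii] [seq x.2 | x <- jj])%:R.
Proof.
rewrite /iota_map /= -/cands.
under eq_bigr => m fib do rewrite (Phi_iota_fiber fib).
rewrite -natr_sum exchange_big natr_sum [RHS]big_mkcond; apply: eq_bigr => ii _.
case: (boolP (sorted <%O ii)) => si; last first.
  by rewrite big1 // => m _; rewrite big1 // => jj _; rewrite (negbTE si).
rewrite exchange_big natr_sum [RHS]big_mkcond; apply: eq_bigr => jj _.
case: (boolP (sorted <%O jj)) => sj; last by rewrite big1 // => m _; rewrite (negbTE sj).
by rewrite /= -natrM mulnb -in_iota_fiber_pmono -sum_iota_fiber_eq.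
Qed.

End IotaPhi.

Lemma exchange_big_adm (T : Type) (s : seq T) (P : pred T) l
  (F : T -> forall l1 l2 : 'I_l.+1, {ffun 'I_l -> 'I_l1} -> {ffun 'I_l -> 'I_l2} -> rat) :
  \sum_(x <- s | P x) \sum_(l1 < l.+1) \sum_(l2 < l.+1) \sum_(t1 : {ffun 'I_l -> 'I_l1})
     \sum_(t2 : {ffun 'I_l -> 'I_l2} | adm t1 t2) F x l1 l2 t1 t2 =
  \sum_(l1 < l.+1) \sum_(l2 < l.+1) \sum_(t1 : {ffun 'I_l -> 'I_l1})
     \sum_(t2 : {ffun 'I_l -> 'I_l2} | adm t1 t2) \sum_(x <- s | P x) F x l1 l2 t1 t2.
Proof.
rewrite exchange_big; apply: eq_bigr => l1 _.
rewrite exchange_big; apply: eq_bigr => l2 _.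
by rewrite exchange_big; apply: eq_bigr => t1 _; rewrite exchange_big.
Qed.

Section LexiPairs.
Variables (dA dB dC dD : Order.disp_t).
Variables (A : orderType dA) (B : orderType dB) (C : orderType dC) (D : orderType dD).

Lemma sum_sorted_lexi_pair (UA : seq A) (UB : seq B) (VC : seq C) (VD : seq D) k l
  (G1 : seq A -> seq C -> bool) (G2 : seq B -> seq D -> bool) :
  uniq UA -> uniq UB -> uniq VC -> uniq VD ->
  \sum_(ii <- all_tuples [seq ((x, y) : A *l B) | x <- UA, y <- UB] k | sorted <%O ii)
    \sum_(jj <- all_tuples [seq ((x, y) : C *l D) | x <- VC, y <- VD] l | sorted <%O jj)
      ((G1 [seq x.1 | x <- ii] [seq x.1 | x <- jj])%:R *
       (G2 [seq x.2 | x <- ii] [seq x.2 | x <- jj])%:R : rat) =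
  \sum_(k1 < k.+1) \sum_(k2 < k.+1)
   \sum_(s1 : {ffun 'I_k -> 'I_k1}) \sum_(s2 : {ffun 'I_k -> 'I_k2} | adm s1 s2)
  \sum_(l1 < l.+1) \sum_(l2 < l.+1)
   \sum_(t1 : {ffun 'I_l -> 'I_l1}) \sum_(t2 : {ffun 'I_l -> 'I_l2} | adm t1 t2)
    (\sum_(ii1 <- all_tuples UA k1 | sorted <%O ii1)
       \sum_(jj1 <- all_tuples VC l1 | sorted <%O jj1)
         (G1 (nths ii1 (ffun_vals s1)) (nths jj1 (ffun_vals t1)))%:R) *
    (\sum_(ii2 <- all_tuples UB k2 | sorted <%O ii2)
       \sum_(jj2 <- all_tuples VD l2 | sorted <%O jj2)
         (G2 (nths ii2 (ffun_vals s2)) (nths jj2 (ffun_vals t2)))%:R).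
Proof.
move=> uA uB uC uD.
rewrite (sum_sorted_lexi_proj k (fun a b =>
  \sum_(jj <- all_tuples [seq ((x, y) : C *l D) | x <- VC, y <- VD] l | sorted <%O jj)
    ((G1 a [seq x.1 | x <- jj])%:R * (G2 b [seq x.2 | x <- jj])%:R : rat)) uA uB).
apply: eq_bigr => k1 _; apply: eq_bigr => k2 _; apply: eq_bigr => s1 _; apply: eq_bigr => s2 _.
under eq_bigr => ii1 _ do under eq_bigr => ii2 _ do
  rewrite (sum_sorted_lexi_proj l (fun c d =>
    ((G1 (nths ii1 (ffun_vals s1)) c)%:R * (G2 (nths ii2 (ffun_vals s2)) d)%:R : rat)) uC uD).
under eq_bigr => ii1 _ do rewrite exchange_big_adm.
rewrite exchange_big_adm.
apply: eq_bigr => l1 _; apply: eq_bigr => l2 _; apply: eq_bigr => t1 _; apply: eq_bigr => t2 _.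
rewrite mulr_suml; apply: eq_bigr => ii1 _.
rewrite exchange_big mulr_suml; apply: eq_bigr => jj1 _.
by rewrite mulr_sumr; apply: eq_bigr => ii2 _; rewrite mulr_sumr.
Qed.

End LexiPairs.

Unset Implicit Arguments.

Theorem mainTheorem15 (d1 d2 e1 e2 : Order.disp_t)
  (X1 : orderType d1) (X2 : orderType d2) (Y1 : orderType e1) (Y2 : orderType e2)
  (cX1 : exists f : X1 -> nat, injective f) (cX2 : exists f : X2 -> nat, injective f)
  (cY1 : exists f : Y1 -> nat, injective f) (cY2 : exists f : Y2 -> nat, injective f)
  (k l : nat) (M : 'M[nat]_(k, l)) (hM : packed M)
  (n1 : {mset (X1 * Y1)%type}%mset) (n2 : {mset (X2 * Y2)%type}%mset) :
  iota_map (Phi (X := X1 *l X2) (Y := Y1 *l Y2) M) n1 n2 =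
  \sum_(k1 < k.+1) \sum_(k2 < k.+1)
   \sum_(s1 : {ffun 'I_k -> 'I_k1}) \sum_(s2 : {ffun 'I_k -> 'I_k2} | adm s1 s2)
  \sum_(l1 < l.+1) \sum_(l2 < l.+1)
   \sum_(t1 : {ffun 'I_l -> 'I_l1}) \sum_(t2 : {ffun 'I_l -> 'I_l2} | adm t1 t2)
    tensor (Phi (X := X1) (Y := Y1) (mu s1 *m M *m (mu t1)^T))
           (Phi (X := X2) (Y := Y2) (mu s2 *m M *m (mu t2)^T)) n1 n2.
Proof.
rewrite (iota_Phi_lexi hM) sum_sorted_lexi_pair ?undup_uniq //.
apply: eq_bigr => k1 _; apply: eq_bigr => k2 _; apply: eq_bigr => s1 _; apply: eq_bigr => s2 _.
apply: eq_bigr => l1 _; apply: eq_bigr => l2 _; apply: eq_bigr => t1 _; apply: eq_bigr => t2 _.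
by rewrite /tensor !Phi_mu.
Qed.
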